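(* Let $m>1$, $N\ge2$, $\chi>0$, $X_0\in\mathcal R^N$, and let $X$ be the maximal solution in $\mathcal R^N$ on $[0,T)$ of the gradient flow system with $X(0)=X_0$. Define $f_{m+1}(t)=\frac1{m+1}|X(t)|^{m+1}$. Then $f_{m+1}$ is concave on $[0,T)$, and for all $t\in[0,T)$, $$\frac{df_{m+1}}{dt}(t)=(m-1)\,\mathcal F^N_m(X(t))\,|X(t)|^{m-1},\qquad \frac{d^2f_{m+1}}{dt^2}(t)=-\frac{m-1}{m+1}\,f_{m+1}(t)^{-1}\,\mathcal H^N_{m+1}\Big(\frac{X(t)}{|X(t)|}\Big),$$ where for $Y\in\mathcal R^N$ with $|Y|=1$, $\mathcal H^N_{m+1}(Y)=|\nabla\mathcal F^N_m(Y)|^2-\big((m-1)\mathcal F^N_m(Y)\big)^2\ge0$.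
   Context: $\mathcal R^N=\{X\in\mathbb R^N: X_1<\dots<X_N,\ \sum_iX_i=0\}$; $|\cdot|$ is the Euclidean norm and $\nabla$ the Euclidean gradient on $\mathbb R^N$. $\mathcal F^N_m(X)=\frac1{m-1}\sum_{i=1}^{N-1}(X_{i+1}-X_i)^{1-m}-\frac{\chi}{m-1}\sum_{1\le i\ne j\le N}|X_i-X_j|^{1-m}$. Gradient flow system: for $i=1,\dots,N$, $\dot X_i=-(X_{i+1}-X_i)^{-m}+(X_i-X_{i-1})^{-m}+2\chi\sum_{j\ne i}\mathrm{sign}(j-i)|X_j-X_i|^{-m}$, the first term absent for $i=N$ and the second for $i=1$ (i.e. $\dot X=-\nabla\mathcal F^N_m(X)$). *)

From Stdlib Require Import Reals Lra Lia List.
From Coquelicot Require Import Coquelicot.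
Open Scope R_scope.

(* Vectors of R^N are represented as functions nat -> R, with coordinates
   X_1, ..., X_N of the paper stored at indices 0, ..., N-1.
   Values at indices >= N are irrelevant (never used). *)

Definition sumR (n : nat) (f : nat -> R) : R :=
  fold_right Rplus 0 (map f (seq 0 n)).

Definition normv (N : nat) (X : nat -> R) : R := sqrt (sumR N (fun i => X i ^ 2)).

Definition inRN (N : nat) (X : nat -> R) : Prop :=
  (forall i, (i + 1 < N)%nat -> X i < X (i + 1)%nat) /\ sumR N X = 0.

Definition FNm (N : nat) (m chi : R) (X : nat -> R) : R :=
  / (m - 1) * sumR (N - 1) (fun i => Rpower (X (i + 1)%nat - X i) (1 - m))
  - chi / (m - 1) *
      sumR N (fun i => sumR N (fun j =>
        if Nat.eqb i j then 0 else Rpower (Rabs (X i - X j)) (1 - m))).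

Definition gradF (N : nat) (m chi : R) (Y : nat -> R) (i : nat) : R :=
  Derive (fun s => FNm N m chi (fun j => if Nat.eqb j i then Y j + s else Y j)) 0.

Definition HNm1 (N : nat) (m chi : R) (Y : nat -> R) : R :=
  sumR N (fun i => gradF N m chi Y i ^ 2) - ((m - 1) * FNm N m chi Y) ^ 2.

Definition sgn_nat (j i : nat) : R := if Nat.ltb i j then 1 else -1.

Definition rhs (N : nat) (m chi : R) (X : nat -> R) (i : nat) : R :=
  (if Nat.ltb (i + 1) N then - Rpower (X (i + 1)%nat - X i) (- m) else 0)
  + (if Nat.ltb 0 i then Rpower (X i - X (i - 1)%nat) (- m) else 0)
  + 2 * chi * sumR N (fun j =>
       if Nat.eqb j i then 0 else sgn_nat j i * Rpower (Rabs (X j - X i)) (- m)).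

Definition in_0T (T : Rbar) (t : R) : Prop := 0 <= t /\ Rbar_lt t T.

(* derivative of f at t relative to the set D (one-sided at endpoints) *)
Definition is_deriv_in (D : R -> Prop) (f : R -> R) (t l : R) : Prop :=
  filterlim (fun s => (f s - f t) / (s - t))
    (within (fun s => D s /\ s <> t) (locally t)) (locally l).

Definition is_solution (N : nat) (m chi : R) (X0 : nat -> R) (T : Rbar)
    (X : R -> nat -> R) : Prop :=
  Rbar_lt 0 T /\
  (forall i, (i < N)%nat -> X 0 i = X0 i) /\
  (forall t, in_0T T t ->
     inRN N (X t) /\
     forall i, (i < N)%nat ->
       is_deriv_in (in_0T T) (fun s => X s i) t (rhs N m chi (X t) i)).

Definition is_maximal_solution (N : nat) (m chi : R) (X0 : nat -> R) (T : Rbar)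
    (X : R -> nat -> R) : Prop :=
  is_solution N m chi X0 T X /\
  forall (T' : Rbar) (Y : R -> nat -> R),
    is_solution N m chi X0 T' Y ->
    (forall t, in_0T T t -> forall i, (i < N)%nat -> Y t i = X t i) ->
    Rbar_le T' T.

Definition concave_on (D : R -> Prop) (f : R -> R) : Prop :=
  forall x y l, D x -> D y -> 0 <= l <= 1 ->
    l * f x + (1 - l) * f y <= f (l * x + (1 - l) * y).

(** Along the flow [X' = -grad F], with [F] homogeneous of degree [1 - m], Euler's
    identity gives [d/dt |X|^2 = -2 <X, grad F(X)> = 2 (m - 1) F(X)], which is the
    formula for [f'].  Differentiating once more, [d/dt F(X) = -|grad F(X)|^2], and the
    homogeneity of [F] and of [grad F] turns [f''] into [-(m-1)/(m+1) f^-1 H(X/|X|)].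
    For a unit vector [Y], [(m - 1) F(Y) = -<Y, grad F(Y)>], so [H(Y) >= 0] is the
    Cauchy-Schwarz inequality; hence [f'' <= 0], and [f] is concave by the mean value
    theorem. *)

From Stdlib Require Import Reals Lra Lia List FunctionalExtensionality.
From Coquelicot Require Import Coquelicot.
Open Scope R_scope.

Lemma sumR_S n f : sumR (S n) f = sumR n f + f n.
Proof.
  unfold sumR. rewrite seq_S, map_app, fold_right_app. simpl.
  generalize (f n). induction (map f (seq 0 n)) as [| x l IH]; simpl; intros;
    [ring | rewrite IH; ring].
Qed.

Lemma sumR_ext n f g : (forall i, (i < n)%nat -> f i = g i) -> sumR n f = sumR n g.
Proof.
  induction n as [| n IH]; intros H; [reflexivity |].
  rewrite !sumR_S, IH, H; auto.
Qed.

Lemma sumR_zero n : sumR n (fun _ => 0) = 0.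
Proof. induction n as [| n IH]; [reflexivity | rewrite sumR_S, IH; ring]. Qed.

Lemma sumR_lin n a b f g :
  sumR n (fun i => a * f i + b * g i) = a * sumR n f + b * sumR n g.
Proof. induction n as [| n IH]; [unfold sumR; simpl; ring | rewrite !sumR_S, IH; ring]. Qed.

Lemma sumR_plus n f g : sumR n (fun i => f i + g i) = sumR n f + sumR n g.
Proof. induction n as [| n IH]; [unfold sumR; simpl; ring | rewrite !sumR_S, IH; ring]. Qed.

Lemma sumR_scal n a f : sumR n (fun i => a * f i) = a * sumR n f.
Proof. induction n as [| n IH]; [unfold sumR; simpl; ring | rewrite !sumR_S, IH; ring]. Qed.

Lemma sumR_opp n f : sumR n (fun i => - f i) = - sumR n f.
Proof. induction n as [| n IH]; [unfold sumR; simpl; ring | rewrite !sumR_S, IH; ring]. Qed.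

Lemma sumR_minus n f g : sumR n (fun i => f i - g i) = sumR n f - sumR n g.
Proof. induction n as [| n IH]; [unfold sumR; simpl; ring | rewrite !sumR_S, IH; ring]. Qed.

Lemma sumR_nonneg n f : (forall i, (i < n)%nat -> 0 <= f i) -> 0 <= sumR n f.
Proof.
  induction n as [| n IH]; intros H; [unfold sumR; simpl; lra |].
  rewrite sumR_S. assert (0 <= f n) by (apply H; lia).
  assert (0 <= sumR n f) by (apply IH; intros; apply H; lia). lra.
Qed.

Lemma sumR_ge_term n f i :
  (forall j, (j < n)%nat -> 0 <= f j) -> (i < n)%nat -> f i <= sumR n f.
Proof.
  induction n as [| n IH]; intros H Hi; [lia |]. rewrite sumR_S.
  assert (0 <= f n) by (apply H; lia).
  destruct (Nat.eq_dec i n) as [-> | Hne].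
  - assert (0 <= sumR n f) by (apply sumR_nonneg; intros; apply H; lia). lra.
  - assert (f i <= sumR n f) by (apply IH; [intros; apply H; lia | lia]). lra.
Qed.

Lemma sumR_delta n p f :
  sumR n (fun i => if Nat.eqb i p then f i else 0) = if Nat.ltb p n then f p else 0.
Proof.
  induction n as [| n IH]; [reflexivity |]. rewrite sumR_S, IH.
  destruct (Nat.eqb_spec n p) as [-> | Hne].
  - rewrite (proj2 (Nat.ltb_ge p p)), (proj2 (Nat.ltb_lt p (S p))) by lia. ring.
  - destruct (Nat.ltb_spec p n), (Nat.ltb_spec p (S n)); try ring; lia.
Qed.

Lemma sumR_cauchy_schwarz_unit n a b : sumR n (fun i => a i ^ 2) = 1 ->
  (sumR n (fun i => a i * b i)) ^ 2 <= sumR n (fun i => b i ^ 2).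
Proof.
  intros Ha. set (c := sumR n (fun i => a i * b i)).
  assert (Hsq := sumR_nonneg n (fun i => (b i - c * a i) ^ 2) ltac:(intros; apply pow2_ge_0)).
  assert (E : sumR n (fun i => (b i - c * a i) ^ 2) =
     sumR n (fun i => b i ^ 2) - 2 * c * sumR n (fun i => a i * b i)
     + c ^ 2 * sumR n (fun i => a i ^ 2)).
  { rewrite <- !sumR_scal, <- sumR_minus, <- sumR_plus.
    apply sumR_ext; intros; ring. }
  rewrite E, Ha in Hsq. fold c in Hsq. nra.
Qed.

Definition punctured_within (D : R -> Prop) (t : R) : (R -> Prop) -> Prop :=
  within (fun s => D s /\ s <> t) (@locally R_UniformSpace t).

Global Instance punctured_within_filter D t : Filter (punctured_within D t).
Proof. apply within_filter, locally_filter. Qed.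

Lemma filterlim_Rplus {T} (F : (T -> Prop) -> Prop) {FF : Filter F} f g a b :
  filterlim f F (locally a) -> filterlim g F (locally b) ->
  filterlim (fun x => f x + g x) F (locally (a + b)).
Proof.
  intros Hf Hg. eapply filterlim_comp_2; [exact Hf | exact Hg |].
  exact (@filterlim_plus R_AbsRing R_NormedModule a b).
Qed.

Lemma filterlim_Rmult {T} (F : (T -> Prop) -> Prop) {FF : Filter F} f g a b :
  filterlim f F (locally a) -> filterlim g F (locally b) ->
  filterlim (fun x => f x * g x) F (locally (a * b)).
Proof.
  intros Hf Hg. eapply filterlim_comp_2; [exact Hf | exact Hg |].
  exact (@filterlim_mult R_AbsRing a b).
Qed.

Lemma is_derive_slope_lim (h : R -> R) y0 l : is_derive h y0 l ->
  filterlim (fun y => if Req_EM_T y y0 then l else (h y - h y0) / (y - y0))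
    (@locally R_UniformSpace y0) (locally l).
Proof.
  intros Hd. apply is_derive_Reals in Hd. apply filterlim_locally. intros eps.
  destruct (Hd eps (cond_pos eps)) as [d Hdd]. exists d. intros y Hy.
  change R in y. change (Rabs (y - y0) < d) in Hy.
  change (Rabs ((if Req_EM_T y y0 then l else (h y - h y0) / (y - y0)) - l) < eps).
  destruct (Req_EM_T y y0) as [E | E].
  - rewrite Rminus_eq_0, Rabs_R0. apply cond_pos.
  - specialize (Hdd (y - y0)). replace (y0 + (y - y0)) with y in Hdd by ring.
    apply Hdd; [intro; apply E; lra | exact Hy].
Qed.

Section OneSidedDerivative.

Variable D : R -> Prop.

Lemma filterlim_punctured_within_ext t (f g : R -> R) l :
  (forall s, D s -> s <> t -> f s = g s) ->
  filterlim f (punctured_within D t) (locally l) ->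
  filterlim g (punctured_within D t) (locally l).
Proof.
  intros H. apply filterlim_ext_loc.
  exists (mkposreal 1 Rlt_0_1). intros y _ [H1 H2]. auto.
Qed.

Lemma is_deriv_in_continuous f t l :
  is_deriv_in D f t l -> filterlim f (punctured_within D t) (locally (f t)).
Proof.
  intros H.
  assert (Hlim : filterlim (fun s => f t + (f s - f t) / (s - t) * (s + - t))
                   (punctured_within D t) (locally (f t + l * (t + - t)))).
  { apply (filterlim_Rplus (punctured_within D t)); [apply filterlim_const |].
    apply (filterlim_Rmult (punctured_within D t)); [exact H |].
    apply (filterlim_Rplus (punctured_within D t)); [| apply filterlim_const].
    intros P HP. apply filter_imp with (2 := HP). auto. }
  replace (f t + l * (t + - t)) with (f t) in Hlim by ring.
  revert Hlim. apply filterlim_punctured_within_ext.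
  intros s _ Hs. field. intro; apply Hs; lra.
Qed.

Lemma is_deriv_in_const t c : is_deriv_in D (fun _ => c) t 0.
Proof.
  apply (filterlim_punctured_within_ext t (fun _ => 0)); [| apply filterlim_const].
  intros s _ Hs. field. intro; apply Hs; lra.
Qed.

Lemma is_deriv_in_id t : is_deriv_in D (fun s => s) t 1.
Proof.
  apply (filterlim_punctured_within_ext t (fun _ => 1)); [| apply filterlim_const].
  intros s _ Hs. field. intro; apply Hs; lra.
Qed.

Lemma is_deriv_in_plus f g t a b :
  is_deriv_in D f t a -> is_deriv_in D g t b ->
  is_deriv_in D (fun s => f s + g s) t (a + b).
Proof.
  intros Hf Hg.
  eapply filterlim_punctured_within_ext; [| exact (filterlim_Rplus _ _ _ _ _ Hf Hg)].
  intros s _ Hs. simpl. field. intro; apply Hs; lra.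
Qed.

Lemma is_deriv_in_mult f g t a b l :
  is_deriv_in D f t a -> is_deriv_in D g t b -> l = a * g t + f t * b ->
  is_deriv_in D (fun s => f s * g s) t l.
Proof.
  intros Hf Hg ->.
  eapply filterlim_punctured_within_ext; cycle 1.
  { exact (filterlim_Rplus _ _ _ _ _
             (filterlim_Rmult _ _ _ _ _ Hf (filterlim_const (g t)))
             (filterlim_Rmult _ _ _ _ _ (is_deriv_in_continuous _ _ _ Hf) Hg)). }
  intros s _ Hs. simpl. field. intro; apply Hs; lra.
Qed.

Lemma is_deriv_in_scal f t c a l :
  is_deriv_in D f t a -> l = c * a -> is_deriv_in D (fun s => c * f s) t l.
Proof.
  intros Hf ->. apply is_deriv_in_mult with 0 a; [apply is_deriv_in_const | exact Hf | ring].
Qed.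

Lemma is_deriv_in_minus f g t a b :
  is_deriv_in D f t a -> is_deriv_in D g t b ->
  is_deriv_in D (fun s => f s - g s) t (a - b).
Proof.
  intros Hf Hg. apply (is_deriv_in_plus f (fun s => - g s)); [exact Hf |].
  eapply filterlim_punctured_within_ext;
    [| exact (is_deriv_in_scal g t (-1) b (- b) Hg ltac:(ring))].
  intros s _ Hs. simpl. field. intro; apply Hs; lra.
Qed.

Lemma is_deriv_in_comp (u h : R -> R) t a h' l :
  is_deriv_in D u t a -> is_derive h (u t) h' -> l = h' * a ->
  is_deriv_in D (fun s => h (u s)) t l.
Proof.
  intros Hu Hh ->.
  set (Q := fun y => if Req_EM_T y (u t) then h' else (h y - h (u t)) / (y - u t)).
  assert (HQ : filterlim (fun s => Q (u s)) (punctured_within D t) (locally h')).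
  { eapply filterlim_comp; [apply (is_deriv_in_continuous _ _ _ Hu) |].
    apply is_derive_slope_lim, Hh. }
  eapply filterlim_punctured_within_ext; [| exact (filterlim_Rmult _ _ _ _ _ HQ Hu)].
  intros s _ Hs. simpl. unfold Q. destruct (Req_EM_T (u s) (u t)) as [E | E].
  - rewrite E. field. intro; apply Hs; lra.
  - field. split; intro; [apply Hs | apply E]; lra.
Qed.

Lemma is_deriv_in_sumR n (F : R -> nat -> R) F' t :
  (forall i, (i < n)%nat -> is_deriv_in D (fun s => F s i) t (F' i)) ->
  is_deriv_in D (fun s => sumR n (F s)) t (sumR n F').
Proof.
  induction n as [| n IH]; intros H; [apply (is_deriv_in_const t 0) |].
  rewrite sumR_S.
  replace (fun s => sumR (S n) (F s)) with (fun s => sumR n (F s) + F s n)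
    by (apply functional_extensionality; intros; rewrite sumR_S; reflexivity).
  apply is_deriv_in_plus; [apply IH; intros; apply H; lia | apply H; lia].
Qed.

Lemma is_deriv_in_continuous_at f t l eps :
  is_deriv_in D f t l -> 0 < eps ->
  exists d, 0 < d /\ forall s, D s -> Rabs (s - t) < d -> Rabs (f s - f t) < eps.
Proof.
  intros H Heps.
  destruct (proj1 (filterlim_locally _ _) (is_deriv_in_continuous _ _ _ H)
              (mkposreal eps Heps)) as [d Hd].
  exists d. split; [apply cond_pos |]. intros s Hs Hst.
  destruct (Req_dec s t) as [-> | Hne]; [rewrite Rminus_eq_0, Rabs_R0; exact Heps |].
  exact (Hd s Hst (conj Hs Hne)).
Qed.

Lemma is_derive_of_is_deriv_in f t l d :
  is_deriv_in D f t l -> 0 < d -> (forall s, Rabs (s - t) < d -> D s) ->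
  is_derive f t l.
Proof.
  intros H Hd0 HD. apply is_derive_Reals. intros eps Heps.
  destruct (proj1 (filterlim_locally _ _) H (mkposreal eps Heps)) as [d' Hd'].
  assert (Hmin : 0 < Rmin d' d) by (apply Rmin_pos; [apply cond_pos | exact Hd0]).
  exists (mkposreal _ Hmin). intros h Hh0 Hh. simpl in Hh.
  assert (Hd'' : Rabs (t + h - t) < d').
  { replace (t + h - t) with h by ring. apply Rlt_le_trans with (1 := Hh), Rmin_l. }
  assert (HDh : D (t + h) /\ t + h <> t).
  { split; [apply HD; replace (t + h - t) with h by ring;
            apply Rlt_le_trans with (1 := Hh), Rmin_r | intro; apply Hh0; lra]. }
  specialize (Hd' (t + h) Hd'' HDh).
  change (Rabs ((f (t + h) - f t) / (t + h - t) - l) < eps) in Hd'.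
  replace (t + h - t) with h in Hd' by ring. exact Hd'.
Qed.

End OneSidedDerivative.

Lemma is_deriv_in_subset D D' f t l :
  (forall s, D' s -> D s) -> is_deriv_in D f t l -> is_deriv_in D' f t l.
Proof.
  intros HD H P HP. specialize (H P HP). unfold filtermap, within in *.
  apply filter_imp with (2 := H). intros x Hx [H1 H2]. apply Hx. auto.
Qed.

Lemma derive_nonneg_nondecreasing (g g' : R -> R) a b x y :
  (forall z, a < z < b -> is_derive g z (g' z)) -> (forall z, a < z < b -> 0 <= g' z) ->
  a < x -> x <= y -> y < b -> g x <= g y.
Proof.
  intros Hd Hpos Hax Hxy Hyb. destruct (Req_dec x y) as [-> | Hne]; [lra |].
  destruct (MVT_gen g x y g') as [c [Hc Heq]];
    rewrite ?Rmin_left, ?Rmax_right in * by lra.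
  - intros z Hz. apply Hd. lra.
  - intros z Hz. apply continuity_pt_filterlim, (ex_derive_continuous g z).
    exists (g' z). apply Hd. lra.
  - assert (0 <= g' c) by (apply Hpos; lra).
    assert (0 <= (y - x) * g' c) by (apply Rmult_le_pos; lra). lra.
Qed.

Lemma is_deriv_in_nonneg_nondecreasing (g g' : R -> R) a b :
  (forall s, a <= s <= b -> is_deriv_in (fun s => a <= s <= b) g s (g' s)) ->
  (forall s, a <= s <= b -> 0 <= g' s) -> a <= b -> g a <= g b.
Proof.
  intros Hd Hpos Hab. destruct (Req_dec a b) as [-> | Hne]; [lra |].
  destruct (Rle_or_lt (g a) (g b)) as [| Hlt]; [assumption | exfalso].
  set (eps := (g a - g b) / 3).
  assert (Heps : 0 < eps) by (unfold eps; lra).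
  destruct (is_deriv_in_continuous_at _ _ _ _ eps (Hd a ltac:(lra)) Heps) as [d1 [Hd1 H1]].
  destruct (is_deriv_in_continuous_at _ _ _ _ eps (Hd b ltac:(lra)) Heps) as [d2 [Hd2 H2]].
  set (e := Rmin (Rmin d1 d2) (b - a) / 3).
  assert (Hmin1 := Rmin_l (Rmin d1 d2) (b - a)). assert (Hmin2 := Rmin_r (Rmin d1 d2) (b - a)).
  assert (Hmin3 := Rmin_l d1 d2). assert (Hmin4 := Rmin_r d1 d2).
  assert (He : 0 < e) by (unfold e; apply Rdiv_lt_0_compat; [repeat apply Rmin_pos |]; lra).
  assert (Ha' : Rabs (g (a + e) - g a) < eps).
  { apply H1; [unfold e in *; lra |].
    replace (a + e - a) with e by ring. rewrite Rabs_pos_eq; unfold e in *; lra. }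
  assert (Hb' : Rabs (g (b - e) - g b) < eps).
  { apply H2; [unfold e in *; lra |].
    replace (b - e - b) with (- e) by ring. rewrite Rabs_Ropp, Rabs_pos_eq; unfold e in *; lra. }
  assert (Hmid : g (a + e) <= g (b - e)).
  { apply (derive_nonneg_nondecreasing g g' a b); try (unfold e in *; lra).
    - intros z Hz. apply (is_derive_of_is_deriv_in _ _ _ _ (Rmin (z - a) (b - z)) (Hd z ltac:(lra))).
      + apply Rmin_pos; lra.
      + intros s Hs. assert (Rmin (z - a) (b - z) <= z - a) by apply Rmin_l.
        assert (Rmin (z - a) (b - z) <= b - z) by apply Rmin_r.
        apply Rabs_def2 in Hs. lra.
    - intros z Hz. apply Hpos. lra. }
  apply Rabs_def2 in Ha'. apply Rabs_def2 in Hb'. unfold eps in *. lra.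
Qed.

Section ConcavityOnInterval.

Variable D : R -> Prop.
Hypothesis D_interval : forall a b s, D a -> D b -> a <= s <= b -> D s.

Lemma is_deriv_in_nonneg_nondecreasing_on (g g' : R -> R) a b :
  D a -> D b -> a <= b ->
  (forall s, D s -> is_deriv_in D g s (g' s)) -> (forall s, a <= s <= b -> 0 <= g' s) ->
  g a <= g b.
Proof.
  intros Ha Hb Hab Hd Hpos. apply (is_deriv_in_nonneg_nondecreasing g g'); auto.
  intros s Hs. apply (is_deriv_in_subset D).
  - intros v Hv. apply (D_interval a b); auto.
  - apply Hd, (D_interval a b); auto.
Qed.

Lemma le_tangent_of_deriv_antitone (f df : R -> R) w z :
  (forall t, D t -> is_deriv_in D f t (df t)) ->
  (forall s t, D s -> D t -> s <= t -> df t <= df s) ->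
  D w -> D z -> f w <= f z + df z * (w - z).
Proof.
  intros Hf Hanti Hw Hz.
  assert (Hlin : forall t, is_deriv_in D (fun u => df z * u) t (df z))
    by (intros t; apply is_deriv_in_scal with 1; [apply is_deriv_in_id | ring]).
  destruct (Rle_or_lt w z) as [Hwz | Hzw].
  - cut (f w - df z * w <= f z - df z * z); [nra |].
    apply (is_deriv_in_nonneg_nondecreasing_on (fun u => f u - df z * u) (fun u => df u - df z)); auto.
    + intros t Ht. apply is_deriv_in_minus; auto.
    + intros u Hu. assert (df z <= df u) by (apply Hanti; [apply (D_interval w z) | | ]; tauto).
      lra.
  - cut (df z * z - f z <= df z * w - f w); [nra |].
    apply (is_deriv_in_nonneg_nondecreasing_on (fun u => df z * u - f u) (fun u => df z - df u)); auto; [lra | |].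
    + intros t Ht. apply is_deriv_in_minus; auto.
    + intros u Hu. assert (df u <= df z) by (apply Hanti; [ | apply (D_interval z w) | ]; (tauto || lra)).
      lra.
Qed.

Lemma concave_on_of_le_tangent (f df : R -> R) :
  (forall w z, D w -> D z -> f w <= f z + df z * (w - z)) -> concave_on D f.
Proof.
  intros Htan x y l Hx Hy Hl.
  set (z := l * x + (1 - l) * y).
  assert (Hz : D z).
  { destruct (Rle_or_lt x y); [apply (D_interval x y) | apply (D_interval y x)]; auto;
      unfold z; nra. }
  assert (H1 := Htan x z Hx Hz). assert (H2 := Htan y z Hy Hz).
  assert (l * f x <= l * (f z + df z * (x - z))) by (apply Rmult_le_compat_l; lra).
  assert ((1 - l) * f y <= (1 - l) * (f z + df z * (y - z))) by (apply Rmult_le_compat_l; lra).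
  assert (E : l * (x - z) + (1 - l) * (y - z) = 0) by (unfold z; ring).
  nra.
Qed.

Lemma concave_on_of_deriv2_nonpos (f df d2f : R -> R) :
  (forall t, D t -> is_deriv_in D f t (df t)) ->
  (forall t, D t -> is_deriv_in D df t (d2f t)) ->
  (forall t, D t -> d2f t <= 0) ->
  concave_on D f.
Proof.
  intros Hf Hdf Hd2. apply concave_on_of_le_tangent with df.
  intros w z Hw Hz. apply le_tangent_of_deriv_antitone; auto.
  intros s t Hs Ht Hst. cut (-1 * df s <= -1 * df t); [lra |].
  apply (is_deriv_in_nonneg_nondecreasing_on (fun u => -1 * df u) (fun u => -1 * d2f u)); auto.
  - intros u Hu. apply is_deriv_in_scal with (d2f u); auto.
  - intros u Hu. assert (d2f u <= 0) by (apply Hd2, (D_interval s t); auto). lra.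
Qed.

End ConcavityOnInterval.

Definition increasing_vec (N : nat) (Y : nat -> R) : Prop :=
  forall i, (i + 1 < N)%nat -> Y i < Y (i + 1)%nat.

Lemma increasing_vec_lt N Y i j :
  increasing_vec N Y -> (i < j)%nat -> (j < N)%nat -> Y i < Y j.
Proof.
  intros H Hij HjN. induction j as [| j IH]; [lia |].
  replace (S j) with (j + 1)%nat by lia.
  destruct (Nat.eq_dec i j) as [-> | Hne]; [apply H; lia |].
  apply Rlt_trans with (Y j); [apply IH; lia | apply H; lia].
Qed.

Lemma increasing_vec_sub_neq0 N Y i j :
  increasing_vec N Y -> i <> j -> (i < N)%nat -> (j < N)%nat -> Y i - Y j <> 0.
Proof.
  intros H Hij Hi Hj. destruct (Nat.lt_total i j) as [Hlt | [Heq | Hgt]]; [| lia |].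
  - assert (Y i < Y j) by (eapply increasing_vec_lt; eauto). lra.
  - assert (Y j < Y i) by (eapply increasing_vec_lt; eauto). lra.
Qed.

Lemma increasing_vec_scal N Y c :
  0 < c -> increasing_vec N Y -> increasing_vec N (fun i => c * Y i).
Proof. intros Hc H i Hi. apply Rmult_lt_compat_l; auto. Qed.

Lemma sumR_sq_pos_of_increasing N Y :
  (2 <= N)%nat -> increasing_vec N Y -> 0 < sumR N (fun i => Y i ^ 2).
Proof.
  intros HN Ho.
  assert (H0 := sumR_ge_term N (fun i => Y i ^ 2) 0 ltac:(intros; apply pow2_ge_0) ltac:(lia)).
  assert (H1 := sumR_ge_term N (fun i => Y i ^ 2) 1 ltac:(intros; apply pow2_ge_0) ltac:(lia)).
  assert (H01 : Y 0%nat < Y 1%nat) by (apply (Ho 0%nat); lia). cbv beta in H0, H1.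
  destruct (Rle_or_lt (sumR N (fun i => Y i ^ 2)) 0) as [Hle |]; [| assumption].
  assert (Y 0%nat = 0) by nra. assert (Y 1%nat = 0) by nra. lra.
Qed.

Lemma normv_scal_inv N Y :
  0 < normv N Y -> normv N (fun i => Y i / normv N Y) = 1.
Proof.
  intros Hn. set (n := normv N Y) in *.
  assert (Hn2 : n ^ 2 = sumR N (fun i => Y i ^ 2)).
  { unfold n, normv. rewrite <- Rsqr_pow2. apply Rsqr_sqrt.
    apply sumR_nonneg. intros; apply pow2_ge_0. }
  unfold normv at 1.
  rewrite (sumR_ext N _ (fun i => / n ^ 2 * Y i ^ 2)) by (intros; field; lra).
  rewrite sumR_scal, <- Hn2. replace (/ n ^ 2 * n ^ 2) with 1 by (field; lra).
  apply sqrt_1.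
Qed.

Lemma sumR_sq_of_normv_1 N Y : normv N Y = 1 -> sumR N (fun i => Y i ^ 2) = 1.
Proof.
  unfold normv. intros H.
  assert (H0 : 0 <= sumR N (fun i => Y i ^ 2)) by (apply sumR_nonneg; intros; apply pow2_ge_0).
  rewrite <- (sqrt_sqrt _ H0), H. ring.
Qed.

Lemma Rpower_pos x a : 0 < Rpower x a.
Proof. apply exp_pos. Qed.

Lemma Rpower_plus1 x a : 0 < x -> Rpower x (a + 1) = Rpower x a * x.
Proof. intros. rewrite Rpower_plus, Rpower_1; auto. Qed.

Lemma Rpower_inv_base x a : 0 < x -> Rpower (/ x) a = Rpower x (- a).
Proof. intros Hx. unfold Rpower. rewrite ln_Rinv by exact Hx. f_equal. ring. Qed.

Lemma Rpower_plus_INR x a k : 0 < x -> Rpower x (a + INR k) = Rpower x a * x ^ k.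
Proof.
  intros Hx. induction k as [| k IH]; [rewrite Rplus_0_r; ring |].
  rewrite S_INR, <- Rplus_assoc, Rpower_plus1, IH by exact Hx. simpl. ring.
Qed.

Lemma is_derive_Rpower a y : 0 < y ->
  is_derive (fun x => Rpower x a) y (a * Rpower y (a - 1)).
Proof. intros. apply is_derive_Reals, derivable_pt_lim_power. assumption. Qed.

Definition sg (y : R) : R := if Rlt_dec 0 y then 1 else -1.

Lemma sg_opp y : y <> 0 -> sg (- y) = - sg y.
Proof. intros. unfold sg. destruct (Rlt_dec 0 (- y)), (Rlt_dec 0 y); lra. Qed.

Lemma sg_mul_self y : sg y * y = Rabs y.
Proof.
  unfold sg. destruct (Rlt_dec 0 y); [rewrite Rabs_pos_eq | rewrite Rabs_left1]; lra.
Qed.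

Lemma is_derive_Rpower_abs a y : y <> 0 ->
  is_derive (fun x => Rpower (Rabs x) a) y (a * Rpower (Rabs y) (a - 1) * sg y).
Proof.
  intros Hy. unfold sg. destruct (Rlt_dec 0 y) as [Hp | Hn].
  - rewrite Rmult_1_r. apply is_derive_ext_loc with (fun x => Rpower x a).
    + exists (mkposreal y Hp). intros x Hx. change (Rabs (x - y) < y) in Hx.
      apply Rabs_def2 in Hx. rewrite Rabs_pos_eq; [reflexivity | lra].
    + rewrite Rabs_pos_eq by lra. apply is_derive_Rpower; assumption.
  - assert (Hn' : 0 < - y) by lra.
    apply is_derive_ext_loc with (fun x => Rpower (- x) a).
    + exists (mkposreal (- y) Hn'). intros x Hx. change (Rabs (x - y) < - y) in Hx.
      apply Rabs_def2 in Hx. rewrite Rabs_left; [reflexivity | lra].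
    + rewrite Rabs_left by lra.
      assert (Hc := is_derive_comp (fun x => Rpower x a) (fun x => - x) y _ (-1)
                      (is_derive_Rpower a (- y) Hn') ltac:(auto_derive; auto; ring)).
      replace (a * Rpower (- y) (a - 1) * -1) with (scal (-1) (a * Rpower (- y) (a - 1)))
        by (unfold scal; simpl; unfold mult; simpl; ring).
      exact Hc.
Qed.

Definition unit_vec (k : nat) : nat -> R := fun j => if Nat.eqb j k then 1 else 0.

Lemma sumR_forward_diff_unit_vec n (c : nat -> R) k :
  sumR n (fun i => c i * (unit_vec k (i + 1)%nat - unit_vec k i)) =
  (if Nat.ltb 0 k then (if Nat.ltb (k - 1) n then c (k - 1)%nat else 0) else 0)
  - (if Nat.ltb k n then c k else 0).
Proof.
  rewrite <- (sumR_delta n k c).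
  destruct (Nat.ltb_spec 0 k).
  - rewrite <- (sumR_delta n (k - 1) c), <- sumR_minus. apply sumR_ext. intros i _.
    unfold unit_vec.
    destruct (Nat.eqb_spec (i + 1) k), (Nat.eqb_spec i k), (Nat.eqb_spec i (k - 1));
      first [ring | lia].
  - transitivity (sumR n (fun i => 0 - (if Nat.eqb i k then c i else 0)));
      [| rewrite sumR_minus, sumR_zero; reflexivity].
    apply sumR_ext. intros i _. unfold unit_vec. destruct (Nat.eqb_spec (i + 1) k), (Nat.eqb_spec i k); first [ring | lia].
Qed.

Lemma sumR_pair_diff_unit_vec n (d : nat -> nat -> R) k : (k < n)%nat ->
  sumR n (fun i => sumR n (fun j =>
    if Nat.eqb i j then 0 else d i j * (unit_vec k i - unit_vec k j))) =
  sumR n (fun j => if Nat.eqb k j then 0 else d k j)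
  - sumR n (fun i => if Nat.eqb i k then 0 else d i k).
Proof.
  intros Hk.
  assert (E1 : sumR n (fun j => if Nat.eqb k j then 0 else d k j) =
     sumR n (fun i => if Nat.eqb i k
                      then sumR n (fun j => if Nat.eqb i j then 0 else d i j) else 0)).
  { rewrite sumR_delta. destruct (Nat.ltb_spec k n); [reflexivity | lia]. }
  assert (E2 : sumR n (fun i => if Nat.eqb i k then 0 else d i k) =
     sumR n (fun i => sumR n (fun j =>
       if Nat.eqb j k then (if Nat.eqb i j then 0 else d i j) else 0))).
  { apply sumR_ext. intros i _. rewrite sumR_delta.
    destruct (Nat.ltb_spec k n); [| lia]. rewrite Nat.eqb_sym. reflexivity. }
  rewrite E1, E2, <- sumR_minus. apply sumR_ext. intros i _.
  destruct (Nat.eqb_spec i k) as [-> | Hik].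
  - rewrite <- sumR_minus. apply sumR_ext. intros j _. unfold unit_vec.
    rewrite Nat.eqb_refl. destruct (Nat.eqb_spec k j), (Nat.eqb_spec j k); subst; try lia; ring.
  - rewrite <- (sumR_zero n) at 1. rewrite <- sumR_minus. apply sumR_ext. intros j _.
    unfold unit_vec.
    destruct (Nat.eqb_spec i j), (Nat.eqb_spec j k), (Nat.eqb_spec i k); subst; try lia; ring.
Qed.

Section FNmCalculus.

Variables (N : nat) (m chi : R).

(* The derivative of [FNm] at [Y] in the direction [V]. *)
Definition dFNm (Y V : nat -> R) : R :=
  / (m - 1) * sumR (N - 1) (fun i =>
      (1 - m) * Rpower (Y (i + 1)%nat - Y i) (- m) * (V (i + 1)%nat - V i))
  - chi / (m - 1) * sumR N (fun i => sumR N (fun j =>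
      if Nat.eqb i j then 0 else
        (1 - m) * Rpower (Rabs (Y i - Y j)) (- m) * sg (Y i - Y j) * (V i - V j))).

Lemma is_deriv_in_FNm D (g : R -> nat -> R) g' t :
  increasing_vec N (g t) ->
  (forall j, (j < N)%nat -> is_deriv_in D (fun s => g s j) t (g' j)) ->
  is_deriv_in D (fun s => FNm N m chi (g s)) t (dFNm (g t) g').
Proof.
  intros Ho Hd. unfold FNm, dFNm.
  apply is_deriv_in_minus; (eapply is_deriv_in_scal; [| reflexivity]).
  - apply (is_deriv_in_sumR D (N - 1) (fun s i => Rpower (g s (i + 1)%nat - g s i) (1 - m))).
    intros i Hi.
    eapply (is_deriv_in_comp D (fun s => g s (i + 1)%nat - g s i) (fun y => Rpower y (1 - m))
             t _ ((1 - m) * Rpower (g t (i + 1)%nat - g t i) (1 - m - 1))).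
    + apply is_deriv_in_minus; apply Hd; lia.
    + apply is_derive_Rpower. assert (H := Ho i ltac:(lia)). lra.
    + replace (1 - m - 1) with (- m) by ring. ring.
  - apply (is_deriv_in_sumR D N (fun s i => sumR N (fun j => if Nat.eqb i j then 0 else
        Rpower (Rabs (g s i - g s j)) (1 - m)))).
    intros i Hi.
    apply (is_deriv_in_sumR D N (fun s j => if Nat.eqb i j then 0 else
        Rpower (Rabs (g s i - g s j)) (1 - m))).
    intros j Hj. destruct (Nat.eqb_spec i j); [apply is_deriv_in_const |].
    eapply (is_deriv_in_comp D (fun s => g s i - g s j) (fun y => Rpower (Rabs y) (1 - m))
             t _ ((1 - m) * Rpower (Rabs (g t i - g t j)) (1 - m - 1) * sg (g t i - g t j))).
    + apply is_deriv_in_minus; apply Hd; lia.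
    + apply is_derive_Rpower_abs. apply (increasing_vec_sub_neq0 N); auto.
    + replace (1 - m - 1) with (- m) by ring. ring.
Qed.

Lemma dFNm_linear Y V W a b :
  dFNm Y (fun j => a * V j + b * W j) = a * dFNm Y V + b * dFNm Y W.
Proof.
  unfold dFNm.
  rewrite (sumR_ext (N - 1) _ (fun i =>
     a * ((1 - m) * Rpower (Y (i + 1)%nat - Y i) (- m) * (V (i + 1)%nat - V i))
     + b * ((1 - m) * Rpower (Y (i + 1)%nat - Y i) (- m) * (W (i + 1)%nat - W i))))
    by (intros; ring).
  rewrite (sumR_ext N _ (fun i =>
     a * sumR N (fun j => if Nat.eqb i j then 0 else
           (1 - m) * Rpower (Rabs (Y i - Y j)) (- m) * sg (Y i - Y j) * (V i - V j))
     + b * sumR N (fun j => if Nat.eqb i j then 0 else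
           (1 - m) * Rpower (Rabs (Y i - Y j)) (- m) * sg (Y i - Y j) * (W i - W j)))).
  - rewrite !sumR_lin. ring.
  - intros i _. rewrite <- sumR_lin. apply sumR_ext. intros j _. destruct (Nat.eqb i j); ring.
Qed.

Lemma dFNm_ext Y V W : (forall j, (j < N)%nat -> V j = W j) -> dFNm Y V = dFNm Y W.
Proof.
  intros H. unfold dFNm. f_equal; f_equal; apply sumR_ext; intros i Hi.
  - rewrite !H by lia. reflexivity.
  - apply sumR_ext. intros j Hj. rewrite !H by lia. reflexivity.
Qed.

Lemma dFNm_expansion Y V : dFNm Y V = sumR N (fun k => V k * dFNm Y (unit_vec k)).
Proof.
  set (P := fun n j => if Nat.ltb j n then V j else 0).
  assert (HP : forall n, dFNm Y (P n) = sumR n (fun k => V k * dFNm Y (unit_vec k))).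
  { induction n as [| n IH].
    - rewrite (dFNm_ext _ _ (fun j => 0 * V j + 0 * V j)), dFNm_linear;
        [unfold sumR; simpl; ring |].
      intros j _. unfold P. destruct (Nat.ltb_spec j 0); [lia | ring].
    - rewrite (dFNm_ext _ _ (fun j => 1 * P n j + V n * unit_vec n j)), dFNm_linear, IH, sumR_S;
        [ring |].
      intros j _. unfold P, unit_vec.
      destruct (Nat.ltb_spec j n), (Nat.ltb_spec j (S n)), (Nat.eqb_spec j n); subst;
        first [ring | lia]. }
  rewrite <- HP. apply dFNm_ext. intros j Hj. unfold P.
  destruct (Nat.ltb_spec j N); [reflexivity | lia].
Qed.

Hypothesis m_neq1 : m <> 1.

Lemma dFNm_unit_vec Y k : increasing_vec N Y -> (k < N)%nat ->
  dFNm Y (unit_vec k) = - rhs N m chi Y k.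
Proof.
  intros Ho Hk. unfold dFNm.
  rewrite (sumR_forward_diff_unit_vec (N - 1)
             (fun i => (1 - m) * Rpower (Y (i + 1)%nat - Y i) (- m)) k).
  rewrite (sumR_pair_diff_unit_vec N
             (fun i j => (1 - m) * Rpower (Rabs (Y i - Y j)) (- m) * sg (Y i - Y j)) k Hk).
  set (S := sumR N (fun j =>
    if Nat.eqb j k then 0 else sgn_nat j k * Rpower (Rabs (Y j - Y k)) (- m))).
  assert (Erow : sumR N (fun j => if Nat.eqb k j then 0
                   else (1 - m) * Rpower (Rabs (Y k - Y j)) (- m) * sg (Y k - Y j))
                 = (m - 1) * S).
  { unfold S. rewrite <- sumR_scal. apply sumR_ext. intros j Hj.
    destruct (Nat.eqb_spec k j), (Nat.eqb_spec j k); try lia; [ring |].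
    rewrite Rabs_minus_sym. unfold sgn_nat, sg.
    destruct (Nat.ltb_spec k j), (Rlt_dec 0 (Y k - Y j)); try ring.
    - assert (Y k < Y j) by (apply (increasing_vec_lt N); auto). lra.
    - assert (Y j < Y k) by (apply (increasing_vec_lt N); auto; lia). lra. }
  assert (Ecol : sumR N (fun i => if Nat.eqb i k then 0
                   else (1 - m) * Rpower (Rabs (Y i - Y k)) (- m) * sg (Y i - Y k))
                 = - ((m - 1) * S)).
  { rewrite <- Erow, <- sumR_opp.
    apply sumR_ext. intros i Hi.
    destruct (Nat.eqb_spec i k), (Nat.eqb_spec k i); try lia; [ring |].
    rewrite (Rabs_minus_sym (Y i)). replace (Y i - Y k) with (- (Y k - Y i)) by ring.
    rewrite sg_opp; [ring |]. apply (increasing_vec_sub_neq0 N); auto. }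
  rewrite Erow, Ecol. unfold rhs. fold S.
  destruct (Nat.ltb_spec 0 k), (Nat.ltb_spec (k - 1) (N - 1)), (Nat.ltb_spec k (N - 1)),
    (Nat.ltb_spec (k + 1) N); try lia;
    try replace (k - 1 + 1)%nat with k by lia; field; lra.
Qed.

Lemma dFNm_self Y : increasing_vec N Y -> dFNm Y Y = (1 - m) * FNm N m chi Y.
Proof.
  intros Ho. unfold dFNm, FNm.
  rewrite (sumR_ext (N - 1) _ (fun i => (1 - m) * Rpower (Y (i + 1)%nat - Y i) (1 - m))).
  2: { intros i Hi. assert (H := Ho i ltac:(lia)).
       replace (1 - m) with (- m + 1) at 3 by ring. rewrite Rpower_plus1 by lra. ring. }
  rewrite (sumR_ext N _ (fun i => (1 - m) * sumR N (fun j =>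
     if Nat.eqb i j then 0 else Rpower (Rabs (Y i - Y j)) (1 - m)))).
  2: { intros i Hi. rewrite <- sumR_scal. apply sumR_ext. intros j Hj.
       destruct (Nat.eqb_spec i j) as [| Hij]; [ring |].
       assert (Hne := increasing_vec_sub_neq0 N Y i j Ho Hij Hi Hj).
       replace (1 - m) with (- m + 1) at 3 by ring.
       rewrite Rpower_plus1, <- (sg_mul_self (Y i - Y j)) by (apply Rabs_pos_lt; auto).
       ring. }
  rewrite !sumR_scal. ring.
Qed.

Lemma sumR_mul_rhs Y : increasing_vec N Y ->
  sumR N (fun i => Y i * rhs N m chi Y i) = (m - 1) * FNm N m chi Y.
Proof.
  intros Ho. transitivity (-1 * sumR N (fun k => Y k * dFNm Y (unit_vec k))).
  - rewrite <- sumR_scal. apply sumR_ext. intros i Hi. rewrite dFNm_unit_vec by auto. ring.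
  - rewrite <- dFNm_expansion, dFNm_self by auto. ring.
Qed.

Lemma dFNm_rhs Y : increasing_vec N Y ->
  dFNm Y (rhs N m chi Y) = - sumR N (fun k => rhs N m chi Y k ^ 2).
Proof.
  intros Ho. rewrite dFNm_expansion, <- sumR_opp.
  apply sumR_ext. intros i Hi. rewrite dFNm_unit_vec by auto. ring.
Qed.

Lemma gradF_eq_opp_rhs Y k : increasing_vec N Y -> (k < N)%nat ->
  gradF N m chi Y k = - rhs N m chi Y k.
Proof.
  intros Ho Hk. unfold gradF. apply is_derive_unique.
  set (g := fun s j => if Nat.eqb j k then Y j + s else Y j).
  assert (Hg0 : g 0 = Y).
  { apply functional_extensionality. intros j. unfold g. destruct (Nat.eqb j k); ring. }
  assert (Hd := is_deriv_in_FNm (fun _ => True) g (unit_vec k) 0 ltac:(rewrite Hg0; exact Ho)).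
  rewrite Hg0, dFNm_unit_vec in Hd by auto.
  apply (is_derive_of_is_deriv_in (fun _ => True) _ _ _ 1); [| lra | auto].
  apply Hd. intros j Hj. unfold g, unit_vec. destruct (Nat.eqb j k).
  - rewrite <- (Rplus_0_l 1). apply is_deriv_in_plus; [apply is_deriv_in_const | apply is_deriv_in_id].
  - apply is_deriv_in_const.
Qed.

Lemma HNm1_nonneg Y : increasing_vec N Y -> normv N Y = 1 -> 0 <= HNm1 N m chi Y.
Proof.
  intros Ho Hn. unfold HNm1.
  rewrite (sumR_ext N _ (fun i => (- rhs N m chi Y i) ^ 2))
    by (intros; rewrite gradF_eq_opp_rhs by auto; reflexivity).
  rewrite <- sumR_mul_rhs by auto.
  assert (Hcs := sumR_cauchy_schwarz_unit N Y (fun i => - rhs N m chi Y i)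
                   (sumR_sq_of_normv_1 N Y Hn)).
  cbv beta in Hcs.
  rewrite (sumR_ext N (fun i => Y i * - rhs N m chi Y i)
             (fun i => - (Y i * rhs N m chi Y i))), sumR_opp in Hcs by (intros; ring).
  nra.
Qed.

Lemma FNm_scal Y c : 0 < c -> increasing_vec N Y ->
  FNm N m chi (fun i => c * Y i) = Rpower c (1 - m) * FNm N m chi Y.
Proof.
  intros Hc Ho. unfold FNm.
  rewrite (sumR_ext (N - 1) _ (fun i => Rpower c (1 - m) * Rpower (Y (i + 1)%nat - Y i) (1 - m))).
  2: { intros i Hi. replace (c * Y (i + 1)%nat - c * Y i) with (c * (Y (i + 1)%nat - Y i)) by ring.
       symmetry. apply Rpower_mult_distr; [exact Hc |]. assert (H := Ho i ltac:(lia)). lra. }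
  rewrite (sumR_ext N _ (fun i => Rpower c (1 - m) * sumR N (fun j =>
     if Nat.eqb i j then 0 else Rpower (Rabs (Y i - Y j)) (1 - m)))).
  2: { intros i Hi. rewrite <- sumR_scal. apply sumR_ext. intros j Hj.
       destruct (Nat.eqb_spec i j) as [| Hij]; [ring |].
       replace (c * Y i - c * Y j) with (c * (Y i - Y j)) by ring.
       rewrite Rabs_mult, (Rabs_pos_eq c) by lra.
       symmetry. apply Rpower_mult_distr; [exact Hc |].
       apply Rabs_pos_lt, (increasing_vec_sub_neq0 N); auto. }
  rewrite !sumR_scal. ring.
Qed.

Lemma rhs_scal Y c k : 0 < c -> increasing_vec N Y -> (k < N)%nat ->
  rhs N m chi (fun i => c * Y i) k = Rpower c (- m) * rhs N m chi Y k.
Proof.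
  intros Hc Ho Hk.
  assert (Hpow : forall a b, a < b -> Rpower (c * b - c * a) (- m) = Rpower c (- m) * Rpower (b - a) (- m)).
  { intros a b Hab. replace (c * b - c * a) with (c * (b - a)) by ring.
    symmetry. apply Rpower_mult_distr; lra. }
  unfold rhs.
  rewrite (sumR_ext N _ (fun j => Rpower c (- m) *
     (if Nat.eqb j k then 0 else sgn_nat j k * Rpower (Rabs (Y j - Y k)) (- m)))).
  2: { intros j Hj. destruct (Nat.eqb_spec j k) as [| Hjk]; [ring |].
       replace (c * Y j - c * Y k) with (c * (Y j - Y k)) by ring.
       rewrite Rabs_mult, (Rabs_pos_eq c), <- Rpower_mult_distr by
         (try lra; apply Rabs_pos_lt, (increasing_vec_sub_neq0 N); auto).
       ring. }
  rewrite sumR_scal.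
  destruct (Nat.ltb_spec (k + 1) N), (Nat.ltb_spec 0 k);
    rewrite ?(Hpow (Y k)), ?(Hpow (Y (k - 1)%nat)); try ring.
  all: try (apply Ho; lia).
  all: replace k with (k - 1 + 1)%nat at 2 by lia; apply Ho; lia.
Qed.

Lemma HNm1_scal Y c : 0 < c -> increasing_vec N Y ->
  HNm1 N m chi (fun i => c * Y i) =
  Rpower c (- m) ^ 2 * sumR N (fun k => rhs N m chi Y k ^ 2)
  - ((m - 1) * (Rpower c (1 - m) * FNm N m chi Y)) ^ 2.
Proof.
  intros Hc Ho. unfold HNm1. rewrite FNm_scal, <- sumR_scal by auto. f_equal.
  apply sumR_ext. intros k Hk.
  rewrite gradF_eq_opp_rhs, rhs_scal by auto using increasing_vec_scal. ring.
Qed.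

End FNmCalculus.

Lemma in_0T_interval T a b s : in_0T T a -> in_0T T b -> a <= s <= b -> in_0T T s.
Proof.
  intros [Ha1 Ha2] [Hb1 Hb2] Hs. split; [lra |].
  destruct T; simpl in *; auto. lra.
Qed.

Section GradientFlow.

Variables (m : R) (N : nat) (chi : R) (T : Rbar) (X : R -> nat -> R).

Hypothesis m_gt1 : 1 < m.
Hypothesis N_ge2 : (2 <= N)%nat.
Hypothesis X_increasing : forall t, in_0T T t -> increasing_vec N (X t).
Hypothesis X_flow : forall t, in_0T T t -> forall i, (i < N)%nat ->
  is_deriv_in (in_0T T) (fun s => X s i) t (rhs N m chi (X t) i).

Lemma normv_flow_pos t : in_0T T t -> 0 < normv N (X t).
Proof. intros Ht. apply sqrt_lt_R0, sumR_sq_pos_of_increasing; auto. Qed.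

Lemma is_deriv_in_normv_flow t : in_0T T t ->
  is_deriv_in (in_0T T) (fun s => normv N (X s)) t
    ((m - 1) * FNm N m chi (X t) / normv N (X t)).
Proof.
  intros Ht. assert (Hn := normv_flow_pos t Ht). unfold normv in *.
  eapply is_deriv_in_comp with (h := sqrt).
  - apply (is_deriv_in_sumR _ N (fun s i => X s i ^ 2)
             (fun i => 2 * (X t i * rhs N m chi (X t) i))).
    intros i Hi. eapply is_deriv_in_comp with (h := fun y => y ^ 2); [now apply X_flow | |].
    + apply is_derive_Reals, derivable_pt_lim_pow.
    + simpl. ring.
  - apply is_derive_Reals, derivable_pt_lim_sqrt, sumR_sq_pos_of_increasing; auto.
  - rewrite sumR_scal, sumR_mul_rhs by (auto; lra). field. lra.
Qed.

Lemma is_deriv_in_FNm_flow t : in_0T T t ->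
  is_deriv_in (in_0T T) (fun s => FNm N m chi (X s)) t
    (- sumR N (fun k => rhs N m chi (X t) k ^ 2)).
Proof.
  intros Ht. rewrite <- dFNm_rhs by (auto; lra).
  apply is_deriv_in_FNm; auto.
Qed.

Lemma is_deriv_in_Rpower_normv_flow a t : in_0T T t ->
  is_deriv_in (in_0T T) (fun s => Rpower (normv N (X s)) a) t
    (a * (m - 1) * FNm N m chi (X t) * Rpower (normv N (X t)) (a - 2)).
Proof.
  intros Ht. assert (Hn := normv_flow_pos t Ht).
  eapply (is_deriv_in_comp _ (fun s => normv N (X s)) (fun y => Rpower y a));
    [apply is_deriv_in_normv_flow, Ht | apply is_derive_Rpower, Hn |].
  replace (a - 1) with (a - 2 + 1) by ring. rewrite Rpower_plus1 by exact Hn.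
  field. lra.
Qed.

Lemma is_deriv_in_f_flow t : in_0T T t ->
  is_deriv_in (in_0T T) (fun s => / (m + 1) * Rpower (normv N (X s)) (m + 1)) t
    ((m - 1) * FNm N m chi (X t) * Rpower (normv N (X t)) (m - 1)).
Proof.
  intros Ht. eapply is_deriv_in_scal; [apply is_deriv_in_Rpower_normv_flow, Ht |].
  replace (m + 1 - 2) with (m - 1) by ring. field. lra.
Qed.

Lemma is_deriv_in_df_flow t : in_0T T t ->
  is_deriv_in (in_0T T)
    (fun s => (m - 1) * FNm N m chi (X s) * Rpower (normv N (X s)) (m - 1)) t
    (- ((m - 1) / (m + 1)) * / (/ (m + 1) * Rpower (normv N (X t)) (m + 1)) *
     HNm1 N m chi (fun i => X t i / normv N (X t))).
Proof.
  intros Ht. set (n := normv N (X t)). assert (Hn : 0 < n) by apply normv_flow_pos, Ht.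
  eapply is_deriv_in_mult;
    [eapply is_deriv_in_scal; [apply is_deriv_in_FNm_flow, Ht | reflexivity]
    | apply is_deriv_in_Rpower_normv_flow, Ht |].
  fold n.
  rewrite (f_equal (HNm1 N m chi) (functional_extensionality (fun i => X t i / n)
             (fun i => / n * X t i) (fun i => Rmult_comm (X t i) (/ n)))).
  rewrite HNm1_scal, !Rpower_inv_base by first [lra | auto using Rinv_0_lt_compat].
  assert (Hq := Rpower_pos n (m - 3)). set (q := Rpower n (m - 3)) in Hq.
  assert (Hpow : forall a k, a = m - 3 + INR k -> Rpower n a = q * n ^ k)
    by (intros a k ->; apply Rpower_plus_INR, Hn).
  rewrite (Hpow (- - m) 3%nat), (Hpow (- (1 - m)) 2%nat), (Hpow (m + 1) 4%nat),
    (Hpow (m - 1 - 2) 0%nat),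
    (Hpow (m - 1) 2%nat) by (simpl; ring).
  field. lra.
Qed.

Lemma d2f_flow_nonpos t : in_0T T t ->
  - ((m - 1) / (m + 1)) * / (/ (m + 1) * Rpower (normv N (X t)) (m + 1)) *
    HNm1 N m chi (fun i => X t i / normv N (X t)) <= 0.
Proof.
  intros Ht. assert (Hn := normv_flow_pos t Ht).
  assert (HH : 0 <= HNm1 N m chi (fun i => X t i / normv N (X t))).
  { apply HNm1_nonneg; [lra | | apply normv_scal_inv, Hn].
    intros i Hi. unfold Rdiv. apply Rmult_lt_compat_r;
      [apply Rinv_0_lt_compat, Hn | apply X_increasing; auto]. }
  assert (Hc : 0 < (m - 1) / (m + 1) * / (/ (m + 1) * Rpower (normv N (X t)) (m + 1))).
  { apply Rmult_lt_0_compat; [apply Rdiv_lt_0_compat; lra |].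
    apply Rinv_0_lt_compat, Rmult_lt_0_compat; [apply Rinv_0_lt_compat; lra | apply Rpower_pos]. }
  assert (0 <= (m - 1) / (m + 1) * / (/ (m + 1) * Rpower (normv N (X t)) (m + 1)) *
               HNm1 N m chi (fun i => X t i / normv N (X t)))
    by (apply Rmult_le_pos; lra).
  lra.
Qed.

End GradientFlow.

Theorem proposition4p5 (m : R) (N : nat) (chi : R) (X0 : nat -> R)
  (T : Rbar) (X : R -> nat -> R) :
  1 < m -> (2 <= N)%nat -> 0 < chi -> inRN N X0 ->
  is_maximal_solution N m chi X0 T X ->
  let f := fun t => / (m + 1) * Rpower (normv N (X t)) (m + 1) in
  let df := fun t => (m - 1) * FNm N m chi (X t) * Rpower (normv N (X t)) (m - 1) in
  let d2f := fun t => - ((m - 1) / (m + 1)) * / f t *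
        HNm1 N m chi (fun i => X t i / normv N (X t)) in
  concave_on (in_0T T) f /\
  (forall t, in_0T T t ->
     is_deriv_in (in_0T T) f t (df t) /\ is_deriv_in (in_0T T) df t (d2f t)) /\
  (forall Y : nat -> R, inRN N Y -> normv N Y = 1 -> 0 <= HNm1 N m chi Y).
Proof.
  intros Hm HN _ _ [[_ [_ Hsol]] _] f df d2f.
  assert (Hinc : forall t, in_0T T t -> increasing_vec N (X t))
    by (intros t Ht; exact (proj1 (proj1 (Hsol t Ht)))).
  assert (Hflow := fun t Ht => proj2 (Hsol t Ht)).
  assert (Hf : forall t, in_0T T t -> is_deriv_in (in_0T T) f t (df t))
    by (intros; apply is_deriv_in_f_flow; auto).
  assert (Hdf : forall t, in_0T T t -> is_deriv_in (in_0T T) df t (d2f t))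
    by (intros; apply is_deriv_in_df_flow; auto).
  split; [| split; [split; auto |]].
  - apply (concave_on_of_deriv2_nonpos _ (in_0T_interval T) f df d2f Hf Hdf).
    intros t Ht. apply d2f_flow_nonpos with (T := T); auto.
  - intros Y [HY _] HYn. apply HNm1_nonneg; auto. lra.
Qed.
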